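(* Let $K$ be a differential field of characteristic $0$ and let $M$ be a differential module over $K$ of dimension $4$ with $\det M=\mathbf{1}$. Then $M$ is isomorphic to $A\otimes B$ for differential modules $A,B$ of dimension $2$ with $\det A=\det B=\mathbf{1}$ if and only if there exists $F\in\mathrm{sym}^2M$ with $\partial F=0$ such that $F$ is non degenerate and has an isotropic subspace of dimension $2$.
   Context: A differential module over $K$ is a finite-dimensional $K$-vector space with an additive map $\partial$ satisfying the Leibniz rule; $\mathrm{sym}^2M$ and tensor products carry the induced derivations, $\det M=\Lambda^{\dim M}M$, and $\mathbf{1}$ is the trivial one-dimensional module. An element $F\in\mathrm{sym}^2M$ defines a symmetric bilinear form $(a,b)=F(a\otimes b)$ on $M^*$; non degenerate and (totally) isotropic subspace refer to this form. *)

From HB Require Import structures.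
From mathcomp Require Import all_boot all_order all_algebra.
Set Implicit Arguments. Unset Strict Implicit. Unset Printing Implicit Defensive.
Import GRing.Theory.
Local Open Scope ring_scope.

Definition derivation (K : fieldType) (d : K -> K) : Prop :=
  (forall a b, d (a + b) = d a + d b) /\ (forall a b, d (a * b) = d a * b + a * d b).

Definition is_dmod (K : fieldType) (d : K -> K) (n : nat)
  (D : 'rV[K]_n -> 'rV[K]_n) : Prop :=
  (forall u v, D (u + v) = D u + D v) /\
  (forall (a : K) v, D (a *: v) = d a *: v + a *: D v).

Definition conn (K : fieldType) (n : nat) (D : 'rV[K]_n -> 'rV[K]_n) : 'M[K]_n :=
  \matrix_(i < n) D (delta_mx 0 i).

Definition dmod_iso (K : fieldType) (n : nat) (D1 D2 : 'rV[K]_n -> 'rV[K]_n) : Prop :=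
  exists P : 'M[K]_n, P \in unitmx /\ forall v, D2 (v *m P) = D1 v *m P.

Definition unitD (K : fieldType) (d : K -> K) : 'rV[K]_1 -> 'rV[K]_1 :=
  fun v => map_mx d v.

(* det M = Lambda^n M, one-dimensional with basis w = e_1 /\ ... /\ e_n;
   its induced derivation is  D(a w) = (d a + tr(C) a) w  where C = conn D,
   since  D(w) = sum_i e_1 /\ .. D(e_i) .. /\ e_n = tr(C) w. *)
Definition detD (K : fieldType) (d : K -> K) (n : nat) (D : 'rV[K]_n -> 'rV[K]_n)
  : 'rV[K]_1 -> 'rV[K]_1 :=
  fun v => map_mx d v + \tr (conn D) *: v.

Definition det_trivial (K : fieldType) (d : K -> K) (n : nat)
  (D : 'rV[K]_n -> 'rV[K]_n) : Prop := dmod_iso (detD d D) (unitD d).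

(* Tensor product A (x) B: elements of K^m (x) K^p are m x p matrices X
   (X = sum X_ij e_i (x) f_j), flattened by mxvec; induced derivation
   D(a (x) b) = D a (x) b + a (x) D b. *)
Definition tensorD (K : fieldType) (d : K -> K) (m p : nat)
  (DA : 'rV[K]_m -> 'rV[K]_m) (DB : 'rV[K]_p -> 'rV[K]_p)
  : 'rV[K]_(m * p) -> 'rV[K]_(m * p) :=
  fun w => let X := vec_mx w in
    mxvec (map_mx d X + (conn DA)^T *m X + X *m conn DB).

(* Derivation induced on M (x) M (elements as n x n coefficient matrices). *)
Definition tensor2D (K : fieldType) (d : K -> K) (n : nat)
  (D : 'rV[K]_n -> 'rV[K]_n) (X : 'M[K]_n) : 'M[K]_n :=
  map_mx d X + (conn D)^T *m X + X *m conn D.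

(* sym^2 M realised as the symmetric tensors in M (x) M. *)
Definition is_sym2_elt (K : fieldType) (n : nat) (F : 'M[K]_n) : Prop := F^T = F.

(* F defines the bilinear form (a,b) = a F b^T on M^* (dual coordinates). *)
Definition nondeg_form (K : fieldType) (n : nat) (F : 'M[K]_n) : Prop :=
  \det F != 0.

(* W : k x n matrix of rank k spans a k-dimensional subspace of M^*,
   totally isotropic for the form defined by F. *)
Definition has_isotropic_subsp (K : fieldType) (n k : nat) (F : 'M[K]_n) : Prop :=
  exists W : 'M[K]_(k, n), \rank W = k /\ W *m F *m W^T = 0.

From HB Require Import structures.
From mathcomp Require Import all_boot all_order all_algebra.
From mathcomp Require Import ring.
Set Implicit Arguments. Unset Strict Implicit. Unset Printing Implicit Defensive.
Import GRing.Theory.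
Local Open Scope ring_scope.

(* Identify K^4 = K^2 (x) K^2 with 2 x 2 matrices.  The form eps (x) eps, the
   polarisation of the determinant, is symmetric, nondegenerate and vanishes on
   the plane of matrices supported on the first row, and the tensor connection
   C_A (x) 1 + 1 (x) C_B rescales it by tr C_A + tr C_B; so when det A and
   det B are trivial a scalar multiple of eps (x) eps is horizontal on A (x) B.
   Conversely, in characteristic not 2 a nondegenerate symmetric form with an
   isotropic plane has a hyperbolic basis in which it equals eps (x) eps.  If
   the form is horizontal, the connection matrix in that basis is skew for
   eps (x) eps, and so(eps (x) eps) = sl_2 (+) sl_2 acts exactly as
   C_A (x) 1 + 1 (x) C_B with traceless C_A, C_B. *)

Section Connections.
Variables (K : fieldType) (d : K -> K).
Hypothesis hd : derivation d.

Lemma derivationD a b : d (a + b) = d a + d b. Proof. by case: hd. Qed.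

Lemma derivationM a b : d (a * b) = d a * b + a * d b. Proof. by case: hd. Qed.

Lemma derivation0 : d 0 = 0.
Proof. by apply: (@addrI _ (d 0)); rewrite -derivationD !addr0. Qed.

Lemma derivation1 : d 1 = 0.
Proof.
by apply: (@addrI _ (d 1)); have := derivationM 1 1; rewrite !mul1r mulr1 addr0 => <-.
Qed.

Lemma derivationN a : d (- a) = - d a.
Proof. by apply/eqP; rewrite -addr_eq0 -derivationD addNr derivation0. Qed.

Lemma derivation_sum I (r : seq I) (P : pred I) (F : I -> K) :
  d (\sum_(i <- r | P i) F i) = \sum_(i <- r | P i) d (F i).
Proof. exact: (big_morph d derivationD derivation0). Qed.

Lemma derivationV a : a != 0 -> d a^-1 = - d a / (a * a).
Proof.
move=> a0; have := derivationM a a^-1; rewrite mulfV // derivation1 => /esym/eqP.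
rewrite addr_eq0 => /eqP da'.
have -> : d a^-1 = a^-1 * (a * d a^-1) by rewrite mulrA mulVf ?mul1r.
have -> : a * d a^-1 = - (d a / a) by rewrite da' opprK.
by field.
Qed.

Local Notation dm := (map_mx d).

Lemma dmxD m n (A B : 'M[K]_(m, n)) : dm (A + B) = dm A + dm B.
Proof. by apply/matrixP=> i j; rewrite !mxE derivationD. Qed.

Lemma dmxZ m n a (A : 'M[K]_(m, n)) : dm (a *: A) = d a *: A + a *: dm A.
Proof. by apply/matrixP=> i j; rewrite !mxE derivationM. Qed.

Lemma dmxM m n p (A : 'M[K]_(m, n)) (B : 'M[K]_(n, p)) :
  dm (A *m B) = dm A *m B + A *m dm B.
Proof.
apply/matrixP=> i j; rewrite !mxE derivation_sum -big_split /=.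
by apply: eq_bigr => k _; rewrite derivationM !mxE.
Qed.

Lemma dmx_tr m n (A : 'M[K]_(m, n)) : dm A^T = (dm A)^T.
Proof. by apply/matrixP=> i j; rewrite !mxE. Qed.

Lemma dmx_delta m n i j : dm (delta_mx i j : 'M[K]_(m, n)) = 0.
Proof.
by apply/matrixP=> a b; rewrite !mxE; case: (_ && _); rewrite ?derivation1 ?derivation0.
Qed.

Lemma dmx1 n : dm (1%:M : 'M[K]_n) = 0.
Proof.
by apply/matrixP=> a b; rewrite !mxE; case: (_ == _); rewrite ?derivation1 ?derivation0.
Qed.

Definition connD n (C : 'M[K]_n) (v : 'rV[K]_n) := dm v + v *m C.

Lemma connD_dmod n (C : 'M[K]_n) : is_dmod d (connD C).
Proof.
split=> [u v|a v]; rewrite /connD; first by rewrite dmxD mulmxDl addrACA.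
by rewrite dmxZ -scalemxAl scalerDr addrA.
Qed.

Lemma conn_connD n (C : 'M[K]_n) : conn (connD C) = C.
Proof. by apply/row_matrixP=> i; rewrite rowK /connD dmx_delta add0r -rowE. Qed.

Lemma dmodE n (D : 'rV[K]_n -> 'rV[K]_n) : is_dmod d D -> D =1 connD (conn D).
Proof.
case=> Dadd DZ v; have D0 : D 0 = 0 by apply: (@addrI _ (D 0)); rewrite -Dadd !addr0.
rewrite /connD {1}[v]matrix_sum_delta big_ord1 (big_morph D Dadd D0) mulmx_sum_row.
under eq_bigr => j _ do rewrite DZ.
rewrite big_split /=; congr (_ + _); last by apply: eq_bigr => j _; rewrite rowK.
by rewrite [RHS]matrix_sum_delta big_ord1; apply: eq_bigr => j _; rewrite !mxE.
Qed.

Lemma connD_isoP n (C1 C2 P : 'M[K]_n) :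
  (forall v, connD C2 (v *m P) = connD C1 v *m P) <-> dm P + P *m C2 = C1 *m P.
Proof.
rewrite /connD; split=> [isoP|gaugeP v].
  apply/row_matrixP=> i; have := isoP (delta_mx 0 i).
  rewrite dmxM dmx_delta !mul0mx !add0r -mulmxA -mulmxDr -!rowE => ->.
  by rewrite !rowE mulmxA.
by rewrite dmxM -addrA -mulmxA -mulmxDr gaugeP mulmxDl mulmxA.
Qed.

Lemma dmod_isoP n (D1 D2 : 'rV[K]_n -> 'rV[K]_n) :
    is_dmod d D1 -> is_dmod d D2 -> forall P : 'M[K]_n,
  (forall v, D2 (v *m P) = D1 v *m P) <-> dm P + P *m conn D2 = conn D1 *m P.
Proof.
move=> /dmodE D1E /dmodE D2E P; rewrite -connD_isoP.
by split=> isoP v; move: (isoP v); rewrite D1E D2E.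
Qed.

Lemma tensor2D_gauge n (D1 D2 : 'rV[K]_n -> 'rV[K]_n) (P F : 'M[K]_n) :
    dm P + P *m conn D2 = conn D1 *m P ->
  tensor2D d D2 (P^T *m F *m P) = P^T *m tensor2D d D1 F *m P.
Proof.
move=> gaugeP; rewrite /tensor2D.
have -> : P^T *m (dm F + (conn D1)^T *m F + F *m conn D1) *m P =
    P^T *m dm F *m P + (conn D1 *m P)^T *m F *m P + P^T *m F *m (conn D1 *m P).
  by rewrite trmx_mul !(mulmxDl, mulmxDr) !mulmxA.
rewrite -gaugeP !dmxM dmx_tr linearD /= !trmx_mul !mulmxDr !mulmxA.
by rewrite !mulmxDl -!addrA addrCA; congr (_ + (_ + _)); exact: addrCA.
Qed.

End Connections.

Section MxvecCoordinates.
Variable K : fieldType.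

Lemma sum_mxvec_index m n (F : 'I_(m * n) -> K) :
  \sum_(r < m * n) F r = \sum_(i < m) \sum_(j < n) F (mxvec_index i j).
Proof.
rewrite pair_bigA /= (reindex (uncurry (@mxvec_index m n))) /=.
  by apply: eq_bigr => -[i j].
by case: (curry_mxvec_bij m n) => g h1 h2; exists g => x _; [apply: h1|apply: h2].
Qed.

Lemma mxvec_matrixP m n p q (A B : 'M[K]_(m * n, p * q)) :
  (forall i j k l, A (mxvec_index i j) (mxvec_index k l) =
                   B (mxvec_index i j) (mxvec_index k l)) -> A = B.
Proof.
by move=> eqAB; apply/matrixP => r c; case/mxvec_indexP: r => i j;
  case/mxvec_indexP: c => k l; apply: eqAB.
Qed.

Lemma mxvec_index_entry m n p q (A : 'M[K]_(m * n, p * q)) i j k l :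
  A (mxvec_index i j) (mxvec_index k l) =
  (mxvec (delta_mx i j) *m A) 0 (mxvec_index k l).
Proof. by rewrite mxvec_delta -rowE mxE. Qed.

Lemma mulmx_delta_mxE m n p q (A : 'M[K]_(m, n)) (B : 'M[K]_(p, q)) i j k l :
  (A *m delta_mx i j *m B) k l = A k i * B j l.
Proof.
rewrite mxE (bigD1 j) //= big1 => [|s /negPf nsj]; last first.
  rewrite mxE (bigD1 i) //= big1 => [|t /negPf nti]; last by rewrite mxE nti mulr0.
  by rewrite mxE nsj andbF mulr0 addr0 mul0r.
rewrite addr0 mxE (bigD1 i) //= big1 => [|t /negPf nti]; last by rewrite mxE nti mulr0.
by rewrite mxE !eqxx mulr1 addr0.
Qed.

Lemma mxvec_mul_tr m n (A B : 'M[K]_(m, n)) :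
  mxvec A *m (mxvec B)^T = (\tr (A *m B^T))%:M.
Proof.
apply/matrixP=> a b; rewrite !ord1 !mxE /= mulr1n sum_mxvec_index /mxtrace.
by apply: eq_bigr => i _; rewrite !mxE; apply: eq_bigr => j _; rewrite !mxE !mxvecE.
Qed.

Definition mxvec_pair m n (r : 'I_(m * n)) : 'I_m * 'I_n :=
  enum_val (cast_ord (esym (mxvec_cast m n)) r).

Lemma mxvec_pairK m n i j : mxvec_pair (@mxvec_index m n i j) = (i, j).
Proof. by rewrite /mxvec_pair /mxvec_index cast_ordK enum_rankK. Qed.

Lemma row_mul_trmxE m n p (A : 'M[K]_(m, n)) (M : 'M[K]_n) (B : 'M[K]_(p, n)) a b :
  (A *m M *m B^T) a b = (row a A *m M *m (row b B)^T) 0 0.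
Proof. by rewrite -row_mul mxE [RHS]mxE; apply: eq_bigr => s _; rewrite !mxE. Qed.

End MxvecCoordinates.

Lemma ord2_cases (i : 'I_2) : i = ord0 \/ i = ord_max.
Proof. by case: i => [[|[|//]]] Hi; [left|right]; apply: val_inj. Qed.

Lemma ord2_0max : (ord0 == ord_max :> 'I_2) = false. Proof. by []. Qed.
Lemma ord2_max0 : (ord_max == ord0 :> 'I_2) = false. Proof. by []. Qed.

Lemma sum_ord2 (V : nmodType) (F : 'I_2 -> V) : \sum_(i < 2) F i = F ord0 + F ord_max.
Proof. by rewrite big_ord_recr big_ord1 /=; congr (F _ + _); apply: val_inj. Qed.

Ltac ord2_case i := case: (ord2_cases i) => ->.
Ltac simpl_ord2 := rewrite ?mxE ?eqxx ?ord2_0max ?ord2_max0 /=.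

Section Congruence.
Variables (K : fieldType) (n : nat) (Q F : 'M[K]_n).

Lemma is_sym2_elt_congr : is_sym2_elt F -> is_sym2_elt (Q^T *m F *m Q).
Proof. by rewrite /is_sym2_elt !trmx_mul trmxK mulmxA => ->. Qed.

Lemma nondeg_form_congr : Q \in unitmx -> nondeg_form F -> nondeg_form (Q^T *m F *m Q).
Proof.
rewrite /nondeg_form unitmxE unitfE => detQ detF.
by rewrite !det_mulmx det_tr !mulf_neq0.
Qed.

Lemma isotropic_subsp_congr k : Q \in unitmx ->
  has_isotropic_subsp k F -> has_isotropic_subsp k (Q^T *m F *m Q).
Proof.
move=> Qunit [W [rankW isoW]]; exists (W *m (invmx Q)^T); split.
  by rewrite mxrankMfree ?row_free_unit ?unitmx_tr ?unitmx_inv.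
rewrite trmx_mul trmxK !mulmxA -[W *m _ *m Q^T]mulmxA -trmx_mul mulmxV // trmx1 mulmx1.
by rewrite -[W *m F *m Q *m _]mulmxA mulmxV // mulmx1.
Qed.

End Congruence.

(* Coordinates on K^2 (x) K^2 = 2 x 2 matrices: [eps] is the symplectic form of
   K^2, [eps_tensor] = eps (x) eps is the polarisation of the determinant, and
   [tensorC CA CB] is the connection matrix CA (x) 1 + 1 (x) CB of A (x) B. *)
Section TwoByTwo.
Variable K : fieldType.

Definition mx22 (a b c e : K) : 'M[K]_2 :=
  \matrix_(i < 2, j < 2) if i == ord0 then (if j == ord0 then a else b)
                         else (if j == ord0 then c else e).

Definition eps := mx22 0 1 (-1) 0.

Definition tensorC (CA CB : 'M[K]_2) : 'M[K]_(2 * 2) :=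
  locked (lin_mx (mulmx CA^T) + lin_mx (mulmxr CB)).

Definition eps_tensor : 'M[K]_(2 * 2) :=
  locked (lin_mx (mulmx eps^T) *m lin_mx (mulmxr eps)).

Lemma mxvec_tensorC CA CB (U : 'M[K]_2) :
  mxvec U *m tensorC CA CB = mxvec (CA^T *m U + U *m CB).
Proof. by rewrite /tensorC -lock mulmxDr !mul_vec_lin linearD. Qed.

Lemma mxvec_eps_tensor (U : 'M[K]_2) : mxvec U *m eps_tensor = mxvec (eps^T *m U *m eps).
Proof. by rewrite /eps_tensor -lock mulmxA !mul_vec_lin. Qed.

Lemma tensorCE CA CB i j k l : tensorC CA CB (mxvec_index i j) (mxvec_index k l) =
  CA i k * (l == j)%:R + (k == i)%:R * CB j l.
Proof.
rewrite mxvec_index_entry mxvec_tensorC mxvecE mxE.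
rewrite -[CA^T *m _]mulmx1 -[_ *m CB]mul1mx mulmxA !mulmx_delta_mxE !mxE.
by rewrite [l == j]eq_sym.
Qed.

Lemma eps_tensorE i j k l :
  eps_tensor (mxvec_index i j) (mxvec_index k l) = eps i k * eps j l.
Proof. by rewrite mxvec_index_entry mxvec_eps_tensor mxvecE mulmx_delta_mxE mxE. Qed.

Lemma eps_tensor_sym : eps_tensor^T = eps_tensor.
Proof.
apply: mxvec_matrixP => i j k l; rewrite mxE !eps_tensorE /eps.
by ord2_case i; ord2_case j; ord2_case k; ord2_case l; simpl_ord2; ring.
Qed.

Lemma mul_eps_eps : eps *m eps = -1.
Proof.
apply/matrixP => i j; rewrite !mxE sum_ord2 /eps.
by ord2_case i; ord2_case j; simpl_ord2; ring.
Qed.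

Lemma det_eps_tensor_neq0 : \det eps_tensor != 0.
Proof.
have eps_tensorK : eps_tensor *m eps_tensor = 1.
  apply/row_matrixP => r; rewrite !rowE -[delta_mx 0 r]vec_mxK mulmxA.
  rewrite !mxvec_eps_tensor mulmx1; congr mxvec.
  rewrite -!mulmxA mul_eps_eps mulmxA -trmx_mul mul_eps_eps linearN /= trmx1.
  by rewrite mulNmx mul1mx mulmxN mulmx1 opprK.
apply/eqP => det0; move: (congr1 determinant eps_tensorK).
by rewrite det_mulmx det0 mul0r det1 => /eqP; rewrite eq_sym oner_eq0.
Qed.

Lemma tensorC_eps_tensor (CA CB : 'M[K]_2) :
  (tensorC CA CB)^T *m eps_tensor + eps_tensor *m tensorC CA CB =
  (\tr CA + \tr CB) *: eps_tensor.
Proof.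
apply: mxvec_matrixP => i j k l.
rewrite !mxE !sum_mxvec_index !sum_ord2 !mxE !tensorCE !eps_tensorE /mxtrace !sum_ord2 /eps.
by ord2_case i; ord2_case j; ord2_case k; ord2_case l; simpl_ord2; ring.
Qed.

Definition isotropic_plane : 'M[K]_(2, 2 * 2) := \matrix_(a < 2) mxvec (delta_mx ord0 a).

Lemma isotropic_plane_eps_tensor :
  isotropic_plane *m eps_tensor *m isotropic_plane^T = 0.
Proof.
apply/matrixP => a b; rewrite row_mul_trmxE !rowK mxvec_eps_tensor mxvec_mul_tr.
rewrite !mxE /mxtrace sum_ord2 !mxE !sum_ord2 !mxE /eps.
by ord2_case a; ord2_case b; do 4 (rewrite ?sum_ord2; simpl_ord2); ring.
Qed.

Lemma rank_isotropic_plane : \rank isotropic_plane = 2.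
Proof.
apply/eqP/row_freeP; exists isotropic_plane^T.
rewrite -[X in X *m _^T]mulmx1.
apply/matrixP => a b; rewrite row_mul_trmxE !rowK mulmx1 mxvec_mul_tr.
rewrite !mxE /mxtrace sum_ord2 !mxE !sum_ord2 !mxE.
by ord2_case a; ord2_case b; do 4 (rewrite ?sum_ord2; simpl_ord2); ring.
Qed.

Lemma scaled_eps_tensor_form g : g != 0 ->
  [/\ is_sym2_elt (g *: eps_tensor), nondeg_form (g *: eps_tensor)
     & has_isotropic_subsp 2 (g *: eps_tensor)].
Proof.
move=> g0; split.
- by rewrite /is_sym2_elt linearZ /= eps_tensor_sym.
- by rewrite /nondeg_form detZ mulf_neq0 ?expf_neq0 ?det_eps_tensor_neq0.
- exists isotropic_plane; split; first exact: rank_isotropic_plane.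
  by rewrite -scalemxAr -scalemxAl isotropic_plane_eps_tensor scaler0.
Qed.

End TwoByTwo.
Arguments eps {K}.
Arguments eps_tensor {K}.

Lemma eq_of_subr_scaled (K : fieldType) (x y u k : K) : u = 0 -> x - y = k * u -> x = y.
Proof. by move=> ->; rewrite mulr0 => /eqP; rewrite subr_eq0 => /eqP. Qed.

Section SkewEpsTensor.
Variable K : fieldType.
Hypothesis two_neq0 : (2%:R : K) != 0.

Local Notation i00 := (mxvec_index (@ord0 1) (@ord0 1)).
Local Notation i01 := (mxvec_index (@ord0 1) (@ord_max 1)).
Local Notation i10 := (mxvec_index (@ord_max 1) (@ord0 1)).
Local Notation i11 := (mxvec_index (@ord_max 1) (@ord_max 1)).

(* Each entry of C^T eps_tensor + eps_tensor C is a sum of at most two entries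
   of C with coefficients among 1, -1, 1/2 and -1/2. *)
Local Tactic Notation "skew_entry" hyp(skewC) constr(r) constr(s) :=
  let e := fresh "e" in
  have e := skewC r s;
  rewrite !mxE !sum_mxvec_index !sum_ord2 !mxE !eps_tensorE /eps !mxE
    ?eqxx ?ord2_0max ?ord2_max0 /= in e;
  first [ apply: (eq_of_subr_scaled (k := 1) e); ring
        | apply: (eq_of_subr_scaled (k := -1) e); ring
        | apply: (eq_of_subr_scaled (k := 2^-1) e); field; exact: two_neq0
        | apply: (eq_of_subr_scaled (k := -(2^-1)) e); field; exact: two_neq0 ].

Lemma skew_eps_tensor_tensorC (C : 'M[K]_(2 * 2)) :
    C^T *m eps_tensor + eps_tensor *m C = 0 ->
  exists CA CB, [/\ \tr CA = 0, \tr CB = 0 & C = tensorC CA CB].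
Proof.
move=> skew; have skewC r s : (C^T *m eps_tensor + eps_tensor *m C) r s = 0.
  by rewrite skew mxE.
have c11_00 : C i11 i00 = 0 by skew_entry skewC i00 i00.
have c00_11 : C i00 i11 = 0 by skew_entry skewC i11 i11.
have c10_01 : C i10 i01 = 0 by skew_entry skewC i01 i01.
have c01_10 : C i01 i10 = 0 by skew_entry skewC i10 i10.
have c11_01 : C i11 i01 = C i10 i00 by skew_entry skewC i00 i01.
have c11_10 : C i11 i10 = C i01 i00 by skew_entry skewC i00 i10.
have c11_11 : C i11 i11 = - C i00 i00 by skew_entry skewC i00 i11.
have c10_10 : C i10 i10 = - C i01 i01 by skew_entry skewC i01 i10.
have c10_11 : C i10 i11 = C i00 i01 by skew_entry skewC i01 i11.
have c01_11 : C i01 i11 = C i00 i10 by skew_entry skewC i10 i11.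
pose a := (C i00 i00 + C i01 i01) / 2%:R.
pose b := (C i00 i00 - C i01 i01) / 2%:R.
exists (mx22 a (C i00 i10) (C i10 i00) (- a)), (mx22 b (C i00 i01) (C i01 i00) (- b)).
split; [by rewrite /mxtrace sum_ord2 !mxE /=; ring.. |].
apply: mxvec_matrixP => i j k l; rewrite tensorCE.
ord2_case i; ord2_case j; ord2_case k; ord2_case l; simpl_ord2;
  rewrite ?c11_00 ?c00_11 ?c10_01 ?c01_10 ?c11_01 ?c11_10 ?c11_11 ?c10_10 ?c10_11 ?c01_11 /a /b;
  field; by rewrite ?two_neq0.
Qed.

End SkewEpsTensor.

Section HyperbolicBasis.
Variable K : fieldType.
Hypothesis two_neq0 : (2%:R : K) != 0.

Lemma isotropic_dual k n (F : 'M[K]_n) (W : 'M[K]_(k, n)) :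
    F^T = F -> F \in unitmx -> \rank W = k -> W *m F *m W^T = 0 ->
  exists Z : 'M[K]_(k, n), W *m F *m Z^T = 1%:M /\ Z *m F *m Z^T = 0.
Proof.
move=> Fsym Funit rankW isoW.
have freeWF : row_free (W *m F) by rewrite /row_free mxrankMfree ?row_free_unit ?rankW.
set Z0 := (pinvmx (W *m F))^T.
have WFZ0 : W *m F *m Z0^T = 1%:M by rewrite trmxK mulmxVp.
have Z0FW : Z0 *m F *m W^T = 1%:M.
  by have := congr1 trmx WFZ0; rewrite !trmx_mul trmxK Fsym trmx1 mulmxA.
set S := Z0 *m F *m Z0^T.
have Ssym : S^T = S by rewrite /S !trmx_mul trmxK Fsym mulmxA.
(* Z0 is dual to W but not yet isotropic; correct it by -S/2 along W. *)
set Z := Z0 - 2%:R^-1 *: (S *m W).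
have WFZ : W *m F *m Z^T = 1%:M.
  rewrite linearB linearZ /= trmx_mul mulmxBr -scalemxAr mulmxA isoW mul0mx.
  by rewrite scaler0 subr0.
have ZFW : Z *m F *m W^T = 1%:M.
  by have := congr1 trmx WFZ; rewrite !trmx_mul trmxK Fsym trmx1 mulmxA.
exists Z; split => //.
rewrite {2}/Z linearB linearZ /= trmx_mul Ssym mulmxBr -scalemxAr mulmxA ZFW mul1mx.
rewrite /Z mulmxBl mulmxBl -!scalemxAl -/S -!mulmxA [W *m _]mulmxA WFZ0 mulmx1.
rewrite mulmxA -/S -{1}[S]scale1r -!scalerBl (_ : 1 - _ - _ = 0) ?scale0r //.
by field.
Qed.

Lemma eps_tensor_normal_form (F : 'M[K]_(2 * 2)) (W : 'M[K]_(2, 2 * 2)) :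
    F^T = F -> \det F != 0 -> \rank W = 2 -> W *m F *m W^T = 0 ->
  exists2 P : 'M[K]_(2 * 2), P \in unitmx & P^T *m F *m P = eps_tensor.
Proof.
move=> Fsym detF rankW isoW; have Funit : F \in unitmx by rewrite unitmxE unitfE.
have [Z [WFZ ZFZ]] := isotropic_dual Fsym Funit rankW isoW.
have ZFW : Z *m F *m W^T = 1%:M.
  by have := congr1 trmx WFZ; rewrite !trmx_mul trmxK Fsym trmx1 mulmxA.
(* The hyperbolic basis (W_0, W_1, -Z_1, Z_0), indexed like mxvec. *)
pose basis (i j : 'I_2) : 'rV[K]_(2 * 2) :=
  if i == ord0 then row j W else if j == ord0 then - row ord_max Z else row ord0 Z.
pose R : 'M[K]_(2 * 2) := \matrix_r basis (mxvec_pair r).1 (mxvec_pair r).2.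
have rowR i j : row (mxvec_index i j) R = basis i j by rewrite rowK mxvec_pairK.
have oppmxE (A : 'M[K]_1) : (- A) 0 0 = - A 0 0 by rewrite mxE.
have RFR : R *m F *m R^T = eps_tensor.
  apply: mxvec_matrixP => i j k l; rewrite row_mul_trmxE !rowR eps_tensorE /basis /eps.
  ord2_case i; ord2_case j; ord2_case k; ord2_case l;
    rewrite ?eqxx ?ord2_0max ?ord2_max0 /= ?linearN /= ?mulNmx ?mulmxN ?oppmxE
      -?row_mul_trmxE ?WFZ ?ZFW ?ZFZ ?isoW; simpl_ord2; ring.
exists R^T; last by rewrite trmxK.
rewrite unitmx_tr unitmxE unitfE; apply: contraNneq (det_eps_tensor_neq0 K) => detR.
by rewrite -RFR !det_mulmx det_tr detR !mul0r.
Qed.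

End HyperbolicBasis.

Section TensorDecomposition.
Variables (K : fieldType) (d : K -> K).
Hypothesis hd : derivation d.
Local Notation dm := (map_mx d).

Lemma dmx_eps : dm (eps : 'M[K]_2) = 0.
Proof.
apply/matrixP => i j; rewrite !mxE /eps.
ord2_case i; ord2_case j; simpl_ord2;
  by rewrite ?(derivation0 hd) ?(derivationN hd) ?(derivation1 hd) ?oppr0.
Qed.

Lemma dmx_eps_tensor : dm (eps_tensor : 'M[K]_(2 * 2)) = 0.
Proof.
apply: mxvec_matrixP => i j k l; rewrite !mxE eps_tensorE (derivationM hd).
have deps a b : d (eps a b) = 0.
  by have := congr1 (fun M : 'M[K]_2 => M a b) dmx_eps; rewrite !mxE.
by rewrite !deps mulr0 mul0r addr0.
Qed.

Lemma tensorD_connD (DA DB : 'rV[K]_2 -> 'rV[K]_2) :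
  tensorD d DA DB =1 connD d (tensorC (conn DA) (conn DB)).
Proof.
move=> w; rewrite /tensorD /connD -[w in RHS]vec_mxK mxvec_tensorC map_mxvec.
by rewrite -addrA linearD.
Qed.

Lemma tensorD_dmod (DA DB : 'rV[K]_2 -> 'rV[K]_2) : is_dmod d (tensorD d DA DB).
Proof.
have [Dadd DZ] := connD_dmod hd (tensorC (conn DA) (conn DB)).
by split=> *; rewrite !tensorD_connD.
Qed.

Lemma conn_tensorD (DA DB : 'rV[K]_2 -> 'rV[K]_2) :
  conn (tensorD d DA DB) = tensorC (conn DA) (conn DB).
Proof.
rewrite -[RHS](conn_connD hd); apply/row_matrixP => i.
by rewrite !rowK tensorD_connD.
Qed.

Lemma det_trivial_sol n (D : 'rV[K]_n -> 'rV[K]_n) :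
  det_trivial d D -> exists2 p, p != 0 & d p = \tr (conn D) * p.
Proof.
case=> P [Punit isoP]; have := isoP 1%:M; rewrite mul1mx /unitD /detD (dmx1 hd) add0r.
move/matrixP => /(_ 0 0); rewrite !mxE big_ord1 !mxE eqxx mulr1 => dP.
by exists (P 0 0); rewrite // -unitfE -det_mx11 -unitmxE.
Qed.

Lemma det_trivial_connD n (C : 'M[K]_n) : \tr C = 0 -> det_trivial d (connD d C).
Proof.
move=> trC; exists 1%:M; split; first exact: unitmx1.
by move=> v; rewrite !mulmx1 /unitD /detD (conn_connD hd) trC scale0r addr0.
Qed.

Lemma horizontal_gauge n (D1 D2 : 'rV[K]_n -> 'rV[K]_n) (P : 'M[K]_n) :
    P \in unitmx -> dm P + P *m conn D2 = conn D1 *m P -> forall F : 'M[K]_n,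
  tensor2D d D1 F = 0 <-> tensor2D d D2 (P^T *m F *m P) = 0.
Proof.
move=> Punit gaugeP F; rewrite (tensor2D_gauge hd _ gaugeP).
split=> [-> | horF]; first by rewrite mulmx0 mul0mx.
have := congr1 (fun X => (invmx P)^T *m X *m invmx P) horF.
by rewrite mulmx0 mul0mx !mulmxA -trmx_mul mulmxV // trmx1 mul1mx -mulmxA mulmxV // mulmx1.
Qed.

(* d p = tr(C) p says that 1/p is a horizontal coordinate on det; the factor
   1/(p_A p_B) compensates the rescaling of eps_tensor by tr C_A + tr C_B. *)
Lemma tensorD_horizontal_eps_tensor (DA DB : 'rV[K]_2 -> 'rV[K]_2) :
    det_trivial d DA -> det_trivial d DB ->
  exists2 g, g != 0 & tensor2D d (tensorD d DA DB) (g *: eps_tensor) = 0.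
Proof.
move=> /det_trivial_sol[pA pA0 dpA] /det_trivial_sol[pB pB0 dpB].
have pAB0 : pA * pB != 0 by rewrite mulf_neq0.
exists (pA * pB)^-1; first by rewrite invr_neq0.
have dg : d (pA * pB)^-1 = - (\tr (conn DA) + \tr (conn DB)) * (pA * pB)^-1.
  by rewrite (derivationV hd) // (derivationM hd) dpA dpB; field; rewrite pA0 pB0.
rewrite /tensor2D conn_tensorD (dmxZ hd) dmx_eps_tensor scaler0 addr0.
rewrite -scalemxAr -scalemxAl -addrA -scalerDr tensorC_eps_tensor scalerA -scalerDl dg.
by rewrite mulNr [_ * (_ + _)]mulrC addNr scale0r.
Qed.

Lemma tensor_decomposition_horizontal_form (DM : 'rV[K]_(2 * 2) -> 'rV[K]_(2 * 2))
    (DA DB : 'rV[K]_2 -> 'rV[K]_2) :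
    is_dmod d DM -> det_trivial d DA -> det_trivial d DB ->
    dmod_iso DM (tensorD d DA DB) ->
  exists F : 'M[K]_(2 * 2),
    [/\ is_sym2_elt F, tensor2D d DM F = 0, nondeg_form F & has_isotropic_subsp 2 F].
Proof.
move=> hM detA detB [P [Punit isoP]].
have gaugeP : dm P + P *m conn (tensorD d DA DB) = conn DM *m P.
  exact/(dmod_isoP hd hM (tensorD_dmod DA DB)).
have [g g0 horX] := tensorD_horizontal_eps_tensor detA detB.
have [symX nondegX isoX] := scaled_eps_tensor_form g0.
have Qunit : invmx P \in unitmx by rewrite unitmx_inv.
exists ((invmx P)^T *m (g *: eps_tensor) *m invmx P); split.
- exact: is_sym2_elt_congr.
- apply/(horizontal_gauge Punit gaugeP); rewrite !mulmxA -trmx_mul mulVmx // trmx1.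
  by rewrite mul1mx -mulmxA mulVmx // mulmx1.
- exact: nondeg_form_congr.
- exact: isotropic_subsp_congr.
Qed.

(* In a hyperbolic basis, a horizontal F becomes eps_tensor, which has zero
   derivative; so the new connection matrix is skew for eps_tensor. *)
Lemma horizontal_form_tensor_decomposition (DM : 'rV[K]_(2 * 2) -> 'rV[K]_(2 * 2))
    (F : 'M[K]_(2 * 2)) :
    (2%:R : K) != 0 -> is_dmod d DM ->
    is_sym2_elt F -> tensor2D d DM F = 0 -> nondeg_form F -> has_isotropic_subsp 2 F ->
  exists DA DB : 'rV[K]_2 -> 'rV[K]_2,
    [/\ is_dmod d DA, is_dmod d DB, det_trivial d DA, det_trivial d DB &
        dmod_iso DM (tensorD d DA DB)].
Proof.
move=> two_neq0 hM Fsym horF detF [W [rankW isoW]].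
have [P Punit PFP] := eps_tensor_normal_form two_neq0 Fsym detF rankW isoW.
set C := invmx P *m (conn DM *m P - dm P).
have gaugeC : dm P + P *m C = conn DM *m P by rewrite mulKVmx // addrC subrK.
have gaugeP : dm P + P *m conn (connD d C) = conn DM *m P by rewrite (conn_connD hd).
have := horF; rewrite (horizontal_gauge Punit gaugeP) PFP /tensor2D (conn_connD hd).
rewrite dmx_eps_tensor add0r => /(skew_eps_tensor_tensorC two_neq0)[CA [CB [trA trB CE]]].
exists (connD d CA), (connD d CB); split; try exact: connD_dmod; try exact: det_trivial_connD.
exists P; split => //; apply/(dmod_isoP hd hM (tensorD_dmod _ _) P).
by rewrite conn_tensorD !(conn_connD hd) -CE.
Qed.

End TensorDecomposition.

Unset Implicit Arguments. Set Strict Implicit. Set Printing Implicit Defensive.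

Theorem theorem6p2 (K : fieldType) (d : K -> K) (hd : derivation d)
  (hchar : [pchar K] =i pred0)
  (DM : 'rV[K]_4 -> 'rV[K]_4) (hM : is_dmod d DM) (hdetM : det_trivial d DM) :
  (exists (DA DB : 'rV[K]_2 -> 'rV[K]_2),
      [/\ is_dmod d DA, is_dmod d DB, det_trivial d DA, det_trivial d DB &
          dmod_iso (n := (2 * 2)%N) DM (tensorD d DA DB)])
  <->
  (exists F : 'M[K]_4,
      [/\ is_sym2_elt F, tensor2D d DM F = 0, nondeg_form F &
          has_isotropic_subsp 2 F]).
Proof.
have two_neq0 : (2%:R : K) != 0 by have /pcharf0P -> := hchar.
split=> [[DA [DB [_ _ detA detB isoM]]] | [F [Fsym horF detF isoF]]].
- exact: (tensor_decomposition_horizontal_form hd hM detA detB isoM).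
- exact: (horizontal_form_tensor_decomposition hd two_neq0 hM Fsym horF detF isoF).
Qed.
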